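(* For all integers $n,m$, \[\Phi_{n,m}(u,v;1,1;z,w;q)=\frac{\Phi_{n,m}(u,v;z,w;q)-zwq^{m-1}\Phi_{n,m}(u/z,v/w;z,w;q)}{1-zwq^{-1}}.\] In particular $\Phi_{n,m}(1,1;1,1;z,w;q)=\frac{1-zwq^{n+m-1}}{1-zwq^{-1}}\Phi_{n,m}(z,w;q)$.
   Context: For $n\in\mathbb{Z}$, $(a;q)_n=(a;q)_\infty/(aq^n;q)_\infty$ ($1/(q;q)_n=0$ for $n<0$), $(a_1,\dots,a_k;q)_n=\prod_i(a_i;q)_n$. $\Phi_{n,m}(z,w;q):=\frac{(zwq;q)_{n+m}}{(q,zq,zwq;q)_n(q,wq,zwq;q)_m}$. $\Phi_{n,m}(u,v;z,w;q):=\Phi_{n,m}(z/q,w;q)-\frac{uz}{(z;q)_2}\Phi_{n-1,m}(zq,w/q;q)+\frac{uvzw^2}{(w,zw;q)_2}\Phi_{n-1,m-1}(z,wq;q)$. With $Q=\{y\in\mathbb{Z}^3:y_1+y_2+y_3=0\}$, $\Phi_{n,m;y}(z,w;q):=\frac{(zwq;q)_{n+m}}{(q;q)_{n-y_1}(zq;q)_{n-y_2}(zwq;q)_{n-y_3}(q;q)_{m+y_3}(wq;q)_{m+y_2}(zwq;q)_{m+y_1}}$, and, with $\rho=(1,2,3)$, $\sigma\in S_3$ in one-line notation, $\chi$ the indicator, \[\Phi_{n,m}(u,v;c,d;z,w;q):=\sum_{\sigma\in S_3}\operatorname{sgn}(\sigma)(uz)^{\sigma_1-1}(v/d)^{\chi(\sigma_3=1)}(c/u)^{\chi(\sigma_1=3)}(dw)^{3-\sigma_3}\Phi_{n,m;\sigma-\rho}(z/q,w/q;q).\]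 *)

From HB Require Import structures.
From mathcomp Require Import all_boot all_order all_algebra all_fingroup.
Set Implicit Arguments. Unset Strict Implicit. Unset Printing Implicit Defensive.
Import Order.TTheory GRing.Theory Num.Theory.
Local Open Scope ring_scope.

Section Defs.
Variable R : fieldType.

(* q-Pochhammer symbol (a;q)_n for n : int, i.e. (a;q)_oo/(a q^n;q)_oo:
   n >= 0 : prod_{i=0}^{n-1} (1 - a q^i)
   n = -N < 0 : 1 / prod_{i=1}^{N} (1 - a q^{-i}).
   Note: for a = q and n < 0 the product contains the factor 1 - q q^{-1} = 0,
   so (q;q)_n = 0^-1 = 0 and 1/(q;q)_n = 0, matching the paper's convention. *)
Definition qpoch (a q : R) (n : int) : R :=
  match n with
  | Posz k => \prod_(i < k) (1 - a * q ^+ i)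
  | Negz k => (\prod_(i < k.+1) (1 - a * q ^- i.+1))^-1
  end.

Definition Phi2 (n m : int) (z w q : R) : R :=
  qpoch (z * w * q) q (n + m) /
  (qpoch q q n * qpoch (z * q) q n * qpoch (z * w * q) q n *
   qpoch q q m * qpoch (w * q) q m * qpoch (z * w * q) q m).

Definition Phi4 (n m : int) (u v z w q : R) : R :=
  Phi2 n m (z / q) w q
  - u * z / qpoch z q 2 * Phi2 (n - 1) m (z * q) (w / q) q
  + u * v * z * w ^+ 2 / (qpoch w q 2 * qpoch (z * w) q 2)
      * Phi2 (n - 1) (m - 1) z (w * q) q.

Definition Phiy (n m y1 y2 y3 : int) (z w q : R) : R :=
  qpoch (z * w * q) q (n + m) /
  (qpoch q q (n - y1) * qpoch (z * q) q (n - y2) * qpoch (z * w * q) q (n - y3) *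
   qpoch q q (m + y3) * qpoch (w * q) q (m + y2) * qpoch (z * w * q) q (m + y1)).

(* one-line notation: sigma_i (i = 1,2,3) as a value in {1,2,3} *)
Definition sv (s : 'S_3) (i : nat) : nat := (s (inord i.-1)).+1.

Definition Phi6 (n m : int) (u v c d z w q : R) : R :=
  \sum_(s : 'S_3)
    (-1) ^+ odd_perm s
    * (u * z) ^+ (sv s 1 - 1)
    * (v / d) ^+ (sv s 3 == 1)%N
    * (c / u) ^+ (sv s 1 == 3)%N
    * (d * w) ^+ (3 - sv s 3)
    * Phiy n m ((sv s 1)%:Z - 1) ((sv s 2)%:Z - 2) ((sv s 3)%:Z - 3)
           (z / q) (w / q) q.

End Defs.

From HB Require Import structures.
From mathcomp Require Import all_boot all_order all_algebra all_fingroup.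
From mathcomp Require Import ring zify.
Import Order.TTheory GRing.Theory Num.Theory.
Local Open Scope ring_scope.

(* Proof of Lemma 4.8.  Put a = zw/q, X = q^n, Y = q^m.  Every q-Pochhammer
   symbol occurring in Phi_{n,m}(z,w;q), Phi_{n,m}(u,v;z,w;q) and
   Phi_{n,m}(u,v;1,1;z,w;q) has base q, z, w or a q^j and an index differing
   from n, m or n + m by at most 2.  Using the recurrence of (b;q)_k (valid
   for all integers k, since b is generic) and the base shift
   (bq;q)_k = (b;q)_{k+1}/(1 - b), each of them is a product of one of
   (z;q)_n, (w;q)_m, (a;q)_n, (a;q)_m, (a;q)_{n+m}, 1/(q;q)_n, 1/(q;q)_m
   with a rational function of X and Y.  Hence all three functions are a
   common prefactor times an explicit rational function of X and Y; for
   Phi_{n,m}(u,v;1,1;z,w;q) this rational function is the determinant of a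
   3 x 3 matrix, because the sum over S_3 defining it is a Leibniz expansion.
   The lemma then reduces to two identities between rational functions in
   the free variables X and Y, which are checked by field arithmetic. *)

Lemma int_recurrence_uniq (R : idomainType) (f g h : int -> R) :
  f 0 = g 0 ->
  (forall k, f (k + 1) = f k * h k) -> (forall k, g (k + 1) = g k * h k) ->
  (forall k, h k != 0) -> forall k, f k = g k.
Proof.
move=> fg0 fS gS h_neq0; elim/int_rec => // [k IH|k IH].
  by rewrite -addn1 PoszD fS gS IH.
move: IH; have -> : - (Posz k) = - (Posz k.+1) + 1 by lia.
by rewrite fS gS => /(mulIf (h_neq0 _)).
Qed.

Section QPochhammer.
Variables (R : fieldType) (q : R).
Hypothesis q_neq0 : q != 0.
Implicit Types (a : R) (k : int).

Definition qgeneric a := forall k, a * q ^ k != 1.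

Lemma qfactor_neq0 a k : qgeneric a -> 1 - a * q ^ k != 0.
Proof. by move=> ga; rewrite subr_eq0 eq_sym. Qed.
Arguments qfactor_neq0 {a} k.

(* The factors q - a q^k = q (1 - a q^(k-1)) met after clearing denominators. *)
Lemma qfactor_q_neq0 a k : qgeneric a -> q - a * q ^ k != 0.
Proof.
move=> ga; rewrite subr_eq0; apply: contra (ga (k - 1)) => /eqP qE; apply/eqP.
by rewrite expfzDr // exprN1 mulrA -qE divff.
Qed.

Lemma qgeneric_neq1 a : qgeneric a -> 1 - a != 0.
Proof. by move=> /(qfactor_neq0 0); rewrite mulr1. Qed.

Lemma qgeneric_neq1q a : qgeneric a -> 1 - a * q != 0.
Proof. by move=> /(qfactor_neq0 1); rewrite expr1z. Qed.

Lemma qgeneric_neqq a : qgeneric a -> q - a != 0.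
Proof. by move=> /(qfactor_q_neq0 _ 0); rewrite mulr1. Qed.

Lemma qgenericMq a : qgeneric a -> qgeneric (a * q).
Proof. by move=> ga k; rewrite -mulrA -{1}(expr1z q) -expfzDr. Qed.

Lemma qgeneric_divq a : qgeneric a -> qgeneric (a / q).
Proof. by move=> ga k; rewrite -mulrA -exprN1 -expfzDr. Qed.

Lemma qpoch_succ a k :
  1 - a * q ^ k != 0 -> qpoch a q (k + 1) = qpoch a q k * (1 - a * q ^ k).
Proof.
case: k => [k|[|k]] fk; first by rewrite -PoszD addn1 /qpoch big_ord_recr.
  by rewrite /= subnn big_ord0 big_ord1 mulrC divff.
have -> : Negz k.+1 + 1 = Negz k by rewrite !NegzE; lia.
by rewrite /qpoch [in RHS]big_ord_recr invfM mulfVK.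
Qed.

Lemma qpoch_neq0 a k : qgeneric a -> qpoch a q k != 0.
Proof.
move=> ga; case: k => [k|k] /=; last rewrite invr_eq0.
  by apply/prodf_neq0 => i _; exact: (qfactor_neq0 (Posz i) ga).
by apply/prodf_neq0 => i _; exact: (qfactor_neq0 (Negz i) ga).
Qed.

(* Shifting the base: (aq;q)_k = (a;q)_{k+1} / (1 - a); both sides solve the
   recurrence with multiplier 1 - aq q^k and equal 1 at k = 0. *)
Lemma qpoch_shift a k : qgeneric a -> qpoch (a * q) q k = qpoch a q (k + 1) / (1 - a).
Proof.
move=> ga; have a_neq1 := qgeneric_neq1 _ ga.
apply: (@int_recurrence_uniq _ (fun k => qpoch (a * q) q k)
  (fun k => qpoch a q (k + 1) / (1 - a)) (fun k => 1 - a * q * q ^ k)) => {k} [|k|k|k].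
- by rewrite /qpoch /= add0n big_ord0 big_ord1 expr0 mulr1 divff.
- by rewrite qpoch_succ //; apply/qfactor_neq0/qgenericMq.
- rewrite qpoch_succ; last exact: qfactor_neq0.
  by rewrite mulrAC expfzDr // expr1z -mulrA [q ^ k * q]mulrC !mulrA.
- exact/qfactor_neq0/qgenericMq.
Qed.

Lemma qpoch_addn a k (j : nat) : qgeneric a ->
  qpoch a q (k + j) = qpoch a q k * \prod_(i < j) (1 - a * q ^ k * q ^+ i).
Proof.
move=> ga; elim: j => [|j IH]; first by rewrite addr0 big_ord0 mulr1.
have -> : k + j.+1 = (k + j) + 1 by lia.
rewrite qpoch_succ; last exact: qfactor_neq0.
by rewrite IH big_ord_recr /= -mulrA expfzDr // [a * (_ * _)]mulrA.
Qed.

Lemma qpoch_subn a k (j : nat) : qgeneric a ->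
  qpoch a q (k - j%:Z) = qpoch a q k / \prod_(i < j) (1 - a * (q ^ k / q ^+ j) * q ^+ i).
Proof.
move=> ga; have := qpoch_addn _ (k - j%:Z) j ga.
rewrite subrK expfzDr // -exprnN => ->; rewrite mulfK //.
apply/prodf_neq0 => i _; rewrite exprnN -expfzDr // -mulrA exprnP -expfzDr //.
exact: qfactor_neq0.
Qed.

Lemma qpoch2 a : qpoch a q 2 = (1 - a) * (1 - a * q).
Proof. by rewrite /qpoch /= !big_ord_recr big_ord0 /= mul1r expr0 mulr1 expr1. Qed.

(* The base q is never generic: (q;q)_k = 0 for k < 0.  Its inverse, which is
   what Phi2 and Phi6 contain, still obeys a division-free recurrence. *)
Hypothesis q_not_root_of_unity : forall k, k != 0 -> q ^ k != 1.

Lemma inv_qqpoch_pred k : (qpoch q q (k - 1))^-1 = (1 - q ^ k) * (qpoch q q k)^-1.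
Proof.
have qq_neg j : qpoch q q (Negz j) = 0.
  by rewrite /qpoch big_ord_recl /= expr1 divff // subrr mul0r invr0.
case: k => [[|k]|k].
- by rewrite (_ : Posz 0 - 1 = Negz 0) // qq_neg invr0 expr0z subrr mul0r.
- have -> : Posz k.+1 - 1 = k by lia.
  have -> : Posz k.+1 = k%:Z + 1 by lia.
  have qk_neq1 : 1 - q * q ^ k != 0.
    by rewrite -{1}(expr1z q) -expfzDr // subr_eq0 eq_sym q_not_root_of_unity //; lia.
  rewrite qpoch_succ // expfzDr // expr1z [q ^ _ * q]mulrC.
  by rewrite invfM [RHS]mulrC divfK.
- have -> : Negz k - 1 = Negz k.+1 by rewrite !NegzE; lia.
  by rewrite !qq_neg !invr0 mulr0.
Qed.

Lemma inv_qqpoch_subn k (j : nat) :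
  (qpoch q q (k - j%:Z))^-1 = \prod_(i < j) (1 - q ^ k / q ^+ i) * (qpoch q q k)^-1.
Proof.
elim: j => [|j IH]; first by rewrite subr0 big_ord0 mul1r.
have -> : k - j.+1%:Z = (k - j%:Z) - 1 by lia.
rewrite inv_qqpoch_pred IH big_ord_recr /= mulrA.
by rewrite [_ * (1 - _)]mulrC expfzDr // -exprnN.
Qed.

(* The last three lemmas in the form "the index K equals k +- j", used by the
   rebasing tactics below, which find k and j and discharge K = k +- j. *)
Lemma qpoch_rebase_up a k K (j : nat) : qgeneric a -> K = k + j%:Z ->
  qpoch a q K = qpoch a q k * \prod_(i < j) (1 - a * q ^ k * q ^+ i).
Proof. by move=> ga ->; exact: qpoch_addn. Qed.

Lemma qpoch_rebase_down a k K (j : nat) : qgeneric a -> K = k - j%:Z ->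
  qpoch a q K = qpoch a q k / \prod_(i < j) (1 - a * (q ^ k / q ^+ j) * q ^+ i).
Proof. by move=> ga ->; exact: qpoch_subn. Qed.

Lemma inv_qqpoch_rebase k K (j : nat) : K = k - j%:Z ->
  (qpoch q q K)^-1 = \prod_(i < j) (1 - q ^ k / q ^+ i) * (qpoch q q k)^-1.
Proof. by move=> ->; exact: inv_qqpoch_subn. Qed.

End QPochhammer.
Arguments qgeneric {R} q a.
Arguments qfactor_neq0 {R q a} k.
Arguments qfactor_q_neq0 {R q} q_neq0 {a} k.

Ltac qgeneric_tac := repeat apply: qgenericMq; assumption.

(* Rewrite one symbol (b;q)_K, b <> q, as (b;q)_k times an explicit product,
   where K = k + j with j in {-1, 0, 1, 2}. *)
Ltac rebase_at q k :=
  match goal with |- context [qpoch ?b q ?K] =>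
    lazymatch b with q => fail | _ =>
    lazymatch K with k => fail | _ =>
    first [ rewrite (@qpoch_rebase_up _ q ltac:(assumption) b k K 0 ltac:(qgeneric_tac) ltac:(lia))
          | rewrite (@qpoch_rebase_up _ q ltac:(assumption) b k K 1 ltac:(qgeneric_tac) ltac:(lia))
          | rewrite (@qpoch_rebase_up _ q ltac:(assumption) b k K 2 ltac:(qgeneric_tac) ltac:(lia))
          | rewrite (@qpoch_rebase_down _ q ltac:(assumption) b k K 1 ltac:(qgeneric_tac) ltac:(lia)) ]
    end end
  end.

(* The same for one (q;q)_K^-1, where K = k - j with j in {0, 1, 2}. *)
Ltac rebase_qq_at q k :=
  match goal with |- context [(qpoch q q ?K)^-1] =>
    lazymatch K with k => fail | _ =>
    first [ rewrite (@inv_qqpoch_rebase _ q ltac:(assumption) ltac:(assumption) k K 0 ltac:(lia))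
          | rewrite (@inv_qqpoch_rebase _ q ltac:(assumption) ltac:(assumption) k K 1 ltac:(lia))
          | rewrite (@inv_qqpoch_rebase _ q ltac:(assumption) ltac:(assumption) k K 2 ltac:(lia)) ]
    end
  end.

(* Express every q-Pochhammer symbol through the seven base symbols. *)
Ltac rebase_qpochs q n m :=
  rewrite ?qpoch_shift //; try qgeneric_tac;
  repeat rebase_at q (n + m); repeat rebase_at q n; repeat rebase_at q m;
  repeat rebase_qq_at q n; repeat rebase_qq_at q m;
  rewrite ?big_ord_recr ?big_ord0 /= ?expr0 ?expr1 ?expfzDr //.

(* Side conditions of field: the factors 1 - b q^k, q - b q^k for generic b
   and the base symbols (b;q)_k themselves. *)
Ltac qfactors_neq0 q :=
  repeat (apply/andP; split);
  first [ assumption | exact: oner_neq0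
        | apply: qfactor_neq0; assumption | apply: qfactor_q_neq0; assumption
        | apply: (@qgeneric_neq1 _ q); assumption
        | apply: (@qgeneric_neqq _ q); assumption
        | apply: (@qgeneric_neq1q _ q); assumption
        | apply: qpoch_neq0; assumption ].

Lemma det_mx33 (R : comNzRingType) (A : 'M[R]_3) : \det A =
  A 0 0 * A 1 1 * A 2 2 - A 0 0 * A 1 2 * A 2 1 - A 0 1 * A 1 0 * A 2 2
  + A 0 1 * A 1 2 * A 2 0 + A 0 2 * A 1 0 * A 2 1 - A 0 2 * A 1 1 * A 2 0.
Proof.
rewrite (expand_det_row _ 0) !big_ord_recl big_ord0 /cofactor.
rewrite !(expand_det_row _ 0) !big_ord_recl !big_ord0 /cofactor !det_mx11 !mxE /=.
pose a (i j : nat) := A (inord i) (inord j).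
have Aa i j : A i j = a i j by rewrite /a !inord_val.
by rewrite !Aa /bump /=; ring.
Qed.

Section Phi6Determinant.
Variables (R : fieldType) (n m : int) (u v c d z w q : R).

(* In Phi6 the summand of s in S_3 is sgn(s) times a product of three factors,
   the i-th depending only on s_i: Phi6 is the determinant of this matrix. *)
Definition phi6_entry (i j : nat) : R :=
  let Z := z / q in let W := w / q in
  match i with
  | 0%N => (u * z) ^+ j * (c / u) ^+ (j == 2)%N
           * (qpoch q q (n - j%:Z))^-1 * (qpoch (Z * W * q) q (m + j%:Z))^-1
  | 1%N => (qpoch (Z * q) q (n - (j%:Z - 1)))^-1 * (qpoch (W * q) q (m + (j%:Z - 1)))^-1
  | _ => (v / d) ^+ (j == 0)%N * (d * w) ^+ (2 - j)
           * (qpoch (Z * W * q) q (n - (j%:Z - 2)))^-1 * (qpoch q q (m + (j%:Z - 2)))^-1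
  end.

Lemma Phi6_det : Phi6 n m u v c d z w q = qpoch (z / q * (w / q) * q) q (n + m) *
  \det (\matrix_(i < 3, j < 3) phi6_entry i j).
Proof.
rewrite /determinant mulr_sumr; apply: eq_bigr => s _.
rewrite !big_ord_recl big_ord0 !mxE /sv /=.
have -> : (inord 0 : 'I_3) = ord0 by apply/val_inj; rewrite /= inordK.
have -> : (inord 1 : 'I_3) = lift ord0 ord0 by apply/val_inj; rewrite /= inordK.
have -> : (inord 2 : 'I_3) = lift ord0 (lift ord0 ord0) by apply/val_inj; rewrite /= inordK.
move: (s ord0) (s (lift ord0 ord0)) (s (lift ord0 (lift ord0 ord0))) => j0 j1 j2.
have shift1 x : x.+1%:Z - 1 = x by lia.
have shift2 x : x.+1%:Z - 2 = x%:Z - 1 by lia.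
have shift3 x : x.+1%:Z - 3 = x%:Z - 2 by lia.
rewrite /Phiy shift1 shift2 shift3 !eqSS !subSS /= ?subn1 ?subn0 !invfM.
repeat match goal with |- context [qpoch ?x ?y ?k] =>
  let t := fresh "P" in set t := qpoch x y k; clearbody t end.
set sgn := (-1) ^+ _; set wu := (u * z) ^+ _; set wv := (v / d) ^+ _.
set wc := (c / u) ^+ _; set wd := (d * w) ^+ _.
by clearbody sgn wu wv wc wd; ring.
Qed.

End Phi6Determinant.
Arguments phi6_entry {R} n m u v c d z w q i j.

(* The rational functions of X = q^n and Y = q^m that remain once the common
   prefactor is extracted; a stands for zw/q. *)
Section RationalFunctions.
Variables (R : fieldType) (z w q X Y : R).
Local Notation a := (z * w / q).

Definition phi2_ratio : R :=
  (1 - a * X * Y) * (1 - a * X * Y * q) * (1 - a) * (1 - a * q) * (1 - z) * (1 - w)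
  / ((1 - z * X) * (1 - a * X) * (1 - a * X * q) * (1 - w * Y) * (1 - a * Y) * (1 - a * Y * q)).

Definition phi4_ratio (u v : R) : R :=
  (1 - a * X * Y) * (1 - a) * (1 - w) / ((1 - a * X) * (1 - w * Y) * (1 - a * Y))
  - u * z * (1 - a * X * Y) * (1 - X) * (1 - a) * (1 - a * q)
    / ((1 - z * X) * (1 - a * X) * (1 - a * Y) * (1 - a * Y * q))
  + u * v * z * w ^+ 2 * (1 - a * X * Y) * (1 - X) * (1 - Y) * (1 - z) * (1 - a)
    / ((1 - a * X) * (1 - a * X * q) * (1 - w * Y) * (1 - a * Y) * (1 - a * Y * q)).

Definition phi6_ratio_entry (u v : R) (i j : nat) : R :=
  match i, j with
  | 0%N, 0%N => 1
  | 0%N, 1%N => u * z * (1 - X) / (1 - a * Y)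
  | 0%N, _ => u * z ^+ 2 * (1 - X) * (1 - X / q) / ((1 - a * Y) * (1 - a * Y * q))
  | 1%N, 0%N => (1 - w * Y / q) / (1 - z * X)
  | 1%N, 1%N => 1
  | 1%N, _ => (1 - z * X / q) / (1 - w * Y)
  | _, 0%N => v * w ^+ 2 * (1 - Y) * (1 - Y / q) / ((1 - a * X) * (1 - a * X * q))
  | _, 1%N => w * (1 - Y) / (1 - a * X)
  | _, _ => 1
  end.

End RationalFunctions.
Arguments phi2_ratio {R} z w q X Y.
Arguments phi4_ratio {R} z w q X Y u v.
Arguments phi6_ratio_entry {R} z w q X Y u v i j.

Section Factorization.
Variables (R : fieldType) (n m : int) (z w q : R).
Hypotheses (q_neq0 : q != 0) (q_not_root_of_unity : forall k : int, k != 0 -> q ^ k != 1).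
Hypotheses (gz : qgeneric q z) (gw : qgeneric q w) (gzw : qgeneric q (z * w)).
Let ga : qgeneric q (z * w / q) := @qgeneric_divq R q q_neq0 _ gzw.

Definition phi_prefactor : R :=
  qpoch (z * w / q) q (n + m) * (qpoch q q n)^-1 * (qpoch q q m)^-1
  / (qpoch z q n * qpoch w q m * qpoch (z * w / q) q n * qpoch (z * w / q) q m).

Lemma Phi2_factor : Phi2 n m z w q = phi_prefactor * phi2_ratio z w q (q ^ n) (q ^ m).
Proof.
rewrite /Phi2 /phi_prefactor /phi2_ratio (_ : z * w * q = z * w / q * q * q); last by field.
rewrite !invfM; rebase_qpochs q n m.
move: (qpoch q q n)^-1 (qpoch q q m)^-1 => C1 C2.
by field; qfactors_neq0 q.
Qed.

Lemma Phi4_factor u v :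
  Phi4 n m u v z w q = phi_prefactor * phi4_ratio z w q (q ^ n) (q ^ m) u v.
Proof.
rewrite /Phi4 /Phi2 /phi_prefactor /phi4_ratio !qpoch2.
rewrite (_ : z / q * q = z); last by field.
rewrite (_ : w / q * q = w); last by field.
rewrite (_ : z / q * w * q = z * w / q * q); last by field.
rewrite (_ : z * q * (w / q) * q = z * w / q * q * q); last by field.
rewrite (_ : z * (w * q) * q = z * w / q * q * q * q); last by field.
rewrite (_ : z * w * q = z * w / q * q * q); last by field.
rewrite !invfM; rebase_qpochs q n m.
move: (qpoch q q n)^-1 (qpoch q q m)^-1 => C1 C2.
by field; qfactors_neq0 q.
Qed.

(* The factor pulled out of the i-th row of the matrix of Phi6_det. *)
Definition phi6_row_factor (i : nat) : R :=
  match i with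
  | 0%N => (qpoch q q n)^-1 / qpoch (z * w / q) q m
  | 1%N => (qpoch z q n * qpoch w q m)^-1
  | _ => (qpoch q q m)^-1 / qpoch (z * w / q) q n
  end.

Lemma phi6_entry_factor u v (i j : 'I_3) : phi6_entry n m u v 1 1 z w q i j =
  phi6_row_factor i * phi6_ratio_entry z w q (q ^ n) (q ^ m) u v i j.
Proof.
have uz2 : (u * z) ^+ 2 * (1 / u) = u * z ^+ 2.
  by have [->|u_neq0] := eqVneq u 0; [rewrite !(mul0r, expr0n, exprMn) | field].
have Ea : z / q * (w / q) * q = z * w / q by field.
have Ez : z / q * q = z by field.
have Ew : w / q * q = w by field.
case: i j => [[|[|[|//]]] ?] [[|[|[|//]]] ?];
  rewrite /phi6_entry /phi6_ratio_entry /phi6_row_factor /= ?Ea ?Ez ?Ew;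
  rebase_qpochs q n m; rewrite ?subn0 ?subn1 ?subnn /= ?expr0 ?expr1 ?uz2;
  move: (qpoch q q n)^-1 (qpoch q q m)^-1 => C1 C2.
all: by field; qfactors_neq0 q.
Qed.

Lemma Phi6_factor u v : Phi6 n m u v 1 1 z w q = phi_prefactor *
  \det (\matrix_(i < 3, j < 3) phi6_ratio_entry z w q (q ^ n) (q ^ m) u v i j).
Proof.
rewrite Phi6_det.
have -> : \matrix_(i < 3, j < 3) phi6_entry n m u v 1 1 z w q i j =
    diag_mx (\row_(i < 3) phi6_row_factor i) *m
    \matrix_(i < 3, j < 3) phi6_ratio_entry z w q (q ^ n) (q ^ m) u v i j.
  by apply/matrixP => i j; rewrite mul_diag_mx !mxE phi6_entry_factor.
rewrite det_mulmx det_diag !big_ord_recr big_ord0 !mxE /phi_prefactor /phi6_row_factor /=.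
rewrite (_ : z / q * (w / q) * q = z * w / q); last by field.
move: (qpoch q q n)^-1 (qpoch q q m)^-1 => C1 C2.
by field; qfactors_neq0 q.
Qed.

End Factorization.
Arguments phi_prefactor {R} n m z w q.

(* The two identities between the rational parts, for free X and Y.  The
   hypotheses say that the denominators 1 - zX, 1 - wY, 1 - aX, 1 - aXq,
   1 - aY, 1 - aYq, 1 - a (a = zw/q) do not vanish. *)
Section RationalIdentities.
Variables (R : fieldType) (z w q X Y : R).
Hypotheses (q_neq0 : q != 0) (z_neq0 : z != 0) (w_neq0 : w != 0).
Hypotheses (zX_neq1 : 1 - z * X != 0) (wY_neq1 : 1 - w * Y != 0).
Hypotheses (zwX_neqq : q - z * w * X != 0) (zwX_neq1 : 1 - z * w * X != 0).
Hypotheses (zwY_neqq : q - z * w * Y != 0) (zwY_neq1 : 1 - z * w * Y != 0).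
Hypothesis (zw_neqq : q - z * w != 0).

Lemma phi6_ratio_det u v :
  \det (\matrix_(i < 3, j < 3) phi6_ratio_entry z w q X Y u v i j) =
  (phi4_ratio z w q X Y u v - z * w * (Y / q) * phi4_ratio z w q X Y (u / z) (v / w))
    / (1 - z * w * q^-1).
Proof.
rewrite det_mx33 !mxE /phi6_ratio_entry /phi4_ratio /=.
by field; rewrite ?q_neq0 ?z_neq0 ?w_neq0 ?zX_neq1 ?wY_neq1 ?zwX_neqq ?zwX_neq1
  ?zwY_neqq ?zwY_neq1 ?zw_neqq ?oner_neq0.
Qed.

Lemma phi4_ratio_unit :
  phi4_ratio z w q X Y 1 1 =
  (1 - z * w * (X * Y / q)) * phi2_ratio z w q X Y
  + z * w * (Y / q) * phi4_ratio z w q X Y (1 / z) (1 / w).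
Proof.
rewrite /phi4_ratio /phi2_ratio.
by field; rewrite ?q_neq0 ?z_neq0 ?w_neq0 ?zX_neq1 ?wY_neq1 ?zwX_neqq ?zwX_neq1
  ?zwY_neqq ?zwY_neq1 ?zw_neqq ?oner_neq0.
Qed.

End RationalIdentities.

Theorem lemma4p8 (R : fieldType) (u v z w q : R) (n m : int)
  (hq : q != 0)
  (hqk : forall k : int, k != 0 -> q ^ k != 1)
  (hz0 : z != 0) (hw0 : w != 0)
  (hz : forall k : int, z * q ^ k != 1)
  (hw : forall k : int, w * q ^ k != 1)
  (hzw : forall k : int, z * w * q ^ k != 1) :
  Phi6 n m u v 1 1 z w q =
    (Phi4 n m u v z w q - z * w * q ^ (m - 1) * Phi4 n m (u / z) (v / w) z w q)
      / (1 - z * w * q ^-1)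
  /\
  Phi6 n m 1 1 1 1 z w q =
    (1 - z * w * q ^ (n + m - 1)) / (1 - z * w * q ^-1) * Phi2 n m z w q.
Proof.
have zX k : 1 - z * q ^ k != 0 := qfactor_neq0 k hz.
have wY k : 1 - w * q ^ k != 0 := qfactor_neq0 k hw.
have zwX k : 1 - z * w * q ^ k != 0 := qfactor_neq0 k hzw.
have zwXq k : q - z * w * q ^ k != 0 := qfactor_q_neq0 hq k hzw.
have zwq : q - z * w != 0 by have := zwXq 0; rewrite mulr1.
have part1 u' v' : Phi6 n m u' v' 1 1 z w q =
    (Phi4 n m u' v' z w q - z * w * q ^ (m - 1) * Phi4 n m (u' / z) (v' / w) z w q)
      / (1 - z * w * q ^-1).
  rewrite Phi6_factor // !Phi4_factor // phi6_ratio_det //.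
  by rewrite expfzDr // exprN1; ring.
split; first exact: part1.
rewrite part1 !Phi4_factor // Phi2_factor // phi4_ratio_unit //.
by rewrite !expfzDr // exprN1; ring.
Qed.
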